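(* Let $G=\{G_1,\dots,G_K\}$ be a partition of $[p]$ into nonempty groups, $m=\min_k|G_k|$, and let $\Gamma$ be a $p\times p$ diagonal matrix with $\Gamma_{aa}=\gamma_k$ for all $a\in G_k$, $k=1,\dots,K$. Then for every $B\in\mathcal{C}$, $$\langle\Gamma,B^*-B\rangle\ \ge\ -\frac{\max_k\gamma_k-\min_k\gamma_k}{m}\sum_{j\neq k}|B_{G_jG_k}|_1.$$
   Context: $B_{G_jG_k}=(B_{ab})_{a\in G_j,b\in G_k}$ and $|M|_1$ denotes the sum of the absolute values of the entries of $M$. $\langle M,N\rangle=\mathrm{tr}(M^tN)$. $B^*$ is the $p\times p$ matrix with $B^*_{ab}=1/|G_k|$ if $a,b\in G_k$, and $0$ otherwise. $\mathcal{C}$ is the set of symmetric positive semidefinite $p\times p$ matrices $B$ with $\sum_aB_{ab}=1$ for all $b$, $B_{ab}\ge0$ for all $a,b$, and $\mathrm{tr}(B)=K$. *)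

From HB Require Import structures.
From mathcomp Require Import all_boot all_order all_algebra.
Set Implicit Arguments. Unset Strict Implicit. Unset Printing Implicit Defensive.
Import Order.TTheory GRing.Theory Num.Theory.
Local Open Scope ring_scope.

(* The partition G = {G_1,...,G_K} of [p] is encoded by a labelling
   g : 'I_p -> 'I_K ; G_k = grp g k. *)
Definition grp (p K : nat) (g : 'I_p -> 'I_K) (k : 'I_K) : {set 'I_p} :=
  [set a | g a == k].

(* m = min_k |G_k|  (k0 is any group index, used as the seed of the fold) *)
Definition min_size (p K : nat) (g : 'I_p -> 'I_K) (k0 : 'I_K) : nat :=
  \big[minn/#|grp g k0|]_(k < K) #|grp g k|.

Definition gmax (R : realFieldType) (K : nat) (gamma : 'I_K -> R) (k0 : 'I_K) : R :=
  \big[Num.max/gamma k0]_(k < K) gamma k.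
Definition gmin (R : realFieldType) (K : nat) (gamma : 'I_K -> R) (k0 : 'I_K) : R :=
  \big[Num.min/gamma k0]_(k < K) gamma k.

Definition Gamma (R : realFieldType) (p K : nat) (g : 'I_p -> 'I_K)
  (gamma : 'I_K -> R) : 'M[R]_p := diag_mx (\row_a gamma (g a)).

Definition Bstar (R : realFieldType) (p K : nat) (g : 'I_p -> 'I_K) : 'M[R]_p :=
  \matrix_(a, b) (if g a == g b then (#|grp g (g a)|%:R)^-1 else 0).

Definition frob (R : realFieldType) (p : nat) (M N : 'M[R]_p) : R := \tr (M^T *m N).

Definition psd (R : realFieldType) (p : nat) (B : 'M[R]_p) : Prop :=
  forall x : 'cV[R]_p, 0 <= (x^T *m B *m x) 0 0.

Definition inC (R : realFieldType) (p K : nat) (B : 'M[R]_p) : Prop :=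
  [/\ B^T = B, psd B,
      forall b : 'I_p, \sum_(a < p) B a b = 1,
      forall a b : 'I_p, 0 <= B a b
    & \tr B = K%:R].

Definition blockL1 (R : realFieldType) (p K : nat) (g : 'I_p -> 'I_K)
  (B : 'M[R]_p) (j k : 'I_K) : R :=
  \sum_(a in grp g j) \sum_(b in grp g k) `|B a b|.

From HB Require Import structures.
From mathcomp Require Import all_boot all_order all_algebra.
From mathcomp Require Import ring.
Set Implicit Arguments. Unset Strict Implicit. Unset Printing Implicit Defensive.
Import Order.TTheory GRing.Theory Num.Theory.
Local Open Scope ring_scope.

(* Let [t_k] be the trace of the diagonal block [B_{G_k G_k}].  As [B^*] has
   trace 1 on every diagonal block, [<Gamma, B^* - B> = sum_k gamma_k (1 - t_k)],
   and since [sum_k (1 - t_k) = K - tr B = 0] we may replace [gamma_k] by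
   [gamma_k - max gamma <= 0].  Columns of [B] are nonnegative with sum 1, so
   the columns indexed by [G_k] carry mass [|G_k| - sum(B_{G_k G_k})] outside
   the diagonal block; positive semidefiniteness bounds [sum(B_{G_k G_k})] by
   [|G_k| t_k].  Hence [|G_k| (1 - t_k) <= sum_{j <> k} |B_{G_j G_k}|_1], and the
   bound follows term by term. *)

Section PsdBlocks.
Variables (R : realFieldType) (p : nat) (A : 'M[R]_p).
Hypothesis psdA : psd A.

Lemma psd_offdiag_le (a b : 'I_p) : A a b + A b a <= A a a + A b b.
Proof.
have := psdA (delta_mx a 0 - delta_mx b 0).
rewrite mulmxBr linearB /= !trmx_delta !mulmxBl -!rowE -!colE !mxE.
suff -> : A a a - A b a - (A a b - A b b) = A a a + A b b - (A a b + A b a).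
  by rewrite subr_ge0.
by ring.
Qed.

Lemma psd_block_sum_le (S : {set 'I_p}) :
  \sum_(a in S) \sum_(b in S) A a b <= #|S|%:R * \sum_(a in S) A a a.
Proof.
have sum_sym : \sum_(a in S) \sum_(b in S) (A a b + A b a) =
               2 * \sum_(a in S) \sum_(b in S) A a b.
  under eq_bigr do rewrite big_split /=.
  by rewrite big_split /= [X in _ + X]exchange_big /= mulr_natl mulr2n.
have sum_diag : \sum_(a in S) \sum_(b in S) (A a a + A b b) =
                2 * (#|S|%:R * \sum_(a in S) A a a).
  under eq_bigr do rewrite big_split /= sumr_const.
  by rewrite big_split /= sumr_const sumrMnl -mulr_natl; ring.
have : \sum_(a in S) \sum_(b in S) (A a b + A b a) <=
       \sum_(a in S) \sum_(b in S) (A a a + A b b).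
  by apply: ler_sum => a _; apply: ler_sum => b _; apply: psd_offdiag_le.
by rewrite sum_sym sum_diag ler_pM2l.
Qed.
End PsdBlocks.

Section GroupPartition.
Variables (p K : nat) (g : 'I_p -> 'I_K).

Lemma sum_over_grp (R : realFieldType) (F : 'I_p -> R) :
  \sum_a F a = \sum_k \sum_(a in grp g k) F a.
Proof.
rewrite (partition_big g xpredT) //; apply: eq_bigr => k _.
by apply: eq_bigl => a; rewrite inE.
Qed.

Lemma min_size_le k0 k : (min_size g k0 <= #|grp g k|)%N.
Proof. by rewrite /min_size -minEnat; apply: (@bigmin_le _ nat). Qed.

Lemma min_size_gt0 k0 : (forall k, grp g k != set0) -> (0 < min_size g k0)%N.
Proof.
move=> grp_neq0; rewrite /min_size -minEnat.
by apply: (@le_bigmin _ nat) => [|k _]; rewrite leEnat card_gt0 grp_neq0.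
Qed.

Variable R : realFieldType.

Lemma frob_Gamma (gamma : 'I_K -> R) (M : 'M[R]_p) :
  frob (Gamma g gamma) M = \sum_k gamma k * \sum_(a in grp g k) M a a.
Proof.
rewrite /frob /Gamma tr_diag_mx mul_diag_mx /mxtrace sum_over_grp.
apply: eq_bigr => k _; rewrite mulr_sumr; apply: eq_bigr => a.
by rewrite inE !mxE => /eqP ->.
Qed.

Lemma Bstar_block_trace k : grp g k != set0 ->
  \sum_(a in grp g k) Bstar R g a a = 1.
Proof.
move=> grp_neq0; rewrite (eq_bigr (fun=> (#|grp g k|%:R)^-1)); last first.
  by move=> a; rewrite inE !mxE eqxx => /eqP ->.
by rewrite sumr_const -(mulr_natr (_^-1)) mulVf // pnatr_eq0 -lt0n card_gt0.
Qed.

Lemma offdiag_block_mass (B : 'M[R]_p) k :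
  (forall b, \sum_a B a b = 1) -> (forall a b, 0 <= B a b) -> psd B ->
  (1 - \sum_(a in grp g k) B a a) * #|grp g k|%:R <=
  \sum_(j < K | j != k) blockL1 g B j k.
Proof.
move=> col_sum1 B_ge0 psdB.
have outside_mass b : \sum_(a | g a != k) B a b = 1 - \sum_(a in grp g k) B a b.
  have -> : \sum_(a in grp g k) B a b = \sum_(a | g a == k) B a b.
    by apply: eq_bigl => a; rewrite inE.
  by rewrite -(col_sum1 b) [in RHS](bigID (fun a => g a == k)) /= addrC addrK.
have -> : \sum_(j < K | j != k) blockL1 g B j k =
          \sum_(b in grp g k) (1 - \sum_(a in grp g k) B a b).
  under [RHS]eq_bigr do rewrite -outside_mass.
  rewrite exchange_big (partition_big g (fun j => j != k)) //=.
  apply: eq_bigr => j jk; apply: eq_big => [a | a _].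
    by rewrite inE; case: eqVneq => [->|]; rewrite ?jk ?andbF.
  by apply: eq_bigr => b _; rewrite ger0_norm.
have := psd_block_sum_le psdB (grp g k).
rewrite sumrB sumr_const exchange_big /= -mulr_natr mul1r mulrBl mul1r mulrC.
by rewrite lerD2l lerN2.
Qed.

End GroupPartition.

Lemma deficit_lower_bound (R : realFieldType) (c s m n d o : R) :
  - s <= c -> c <= 0 -> 0 < m -> m <= n -> d * n <= o -> 0 <= o ->
  - (s / m) * o <= c * d.
Proof.
move=> s_c c_le0 m_gt0 m_n dn_o o_ge0.
have n_gt0 : 0 < n := lt_le_trans m_gt0 m_n.
have s_ge0 : 0 <= s by rewrite -oppr_le0 (le_trans s_c).
have d_le : d <= o / n by rewrite ler_pdivlMr.
have on_le_om : o / n <= o / m by rewrite ler_wpM2l // lef_pV2 ?posrE.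
apply: le_trans (ler_wnM2l c_le0 d_le).
apply: le_trans (ler_wpM2r (divr_ge0 o_ge0 (ltW n_gt0)) s_c).
by rewrite !mulNr lerN2 mulrAC -mulrA ler_wpM2l.
Qed.

Theorem mainTheorem6 (R : realFieldType) (p K : nat) (g : 'I_p -> 'I_K)
  (k0 : 'I_K) (gamma : 'I_K -> R)
  (Hne : forall k : 'I_K, grp g k != set0)
  (B : 'M[R]_p) (HB : inC K B) :
  frob (Gamma g gamma) (Bstar R g - B) >=
  - ((gmax gamma k0 - gmin gamma k0) / (min_size g k0)%:R) *
    \sum_(j < K) \sum_(k < K | j != k) blockL1 g B j k.
Proof.
case: HB => _ psdB col_sum1 B_ge0 trB.
set t := fun k => \sum_(a in grp g k) B a a.
have frobE : frob (Gamma g gamma) (Bstar R g - B) = \sum_k gamma k * (1 - t k).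
  rewrite frob_Gamma; apply: eq_bigr => k _.
  rewrite /t -(Bstar_block_trace R (Hne k)) -sumrB.
  by congr (_ * _); apply: eq_bigr => a _; rewrite !mxE.
have deficit_sum0 : \sum_k (1 - t k) = 0.
  by rewrite sumrB sumr_const card_ord /t -sum_over_grp -trB subrr.
have -> : \sum_(j < K) \sum_(k < K | j != k) blockL1 g B j k =
          \sum_(k < K) \sum_(j < K | j != k) blockL1 g B j k.
  by rewrite (exchange_big_dep xpredT).
rewrite frobE mulr_sumr.
under [leRHS]eq_bigr do rewrite -(subrK (gmax gamma k0) (gamma _)) mulrDl.
rewrite big_split /= -[X in _ <= _ + X]mulr_sumr deficit_sum0 mulr0 addr0.
apply: ler_sum => k _; apply: (deficit_lower_bound (n := #|grp g k|%:R)).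
- by rewrite opprB lerD2r; apply: (@bigmin_le _ R).
- by rewrite subr_le0; apply: (@le_bigmax _ R).
- by rewrite ltr0n min_size_gt0.
- by rewrite ler_nat min_size_le.
- exact: offdiag_block_mass.
- by do 3 apply: sumr_ge0 => ? _.
Qed.
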